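(* Let $\mathbb{C}$ be a pointed protomodular category. Every normal subobject (normal monomorphism) of a proto-complete object of $\mathbb{C}$ is a characteristic monomorphism.
   Context: A pointed category with finite limits is protomodular if the split short five lemma holds. A normal monomorphism is a kernel of some morphism; a protosplit monomorphism is a kernel of a split epimorphism. An object $X$ is proto-complete if every protosplit monomorphism with domain $X$ is a split monomorphism. A monomorphism $m:S\to Y$ is Bourn-normal if there is an equivalence relation $(R,r_1,r_2)$ on $Y$ and $\tilde m:S\times S\to R$ with $r_1\tilde m=m\pi_1$, $r_2\tilde m=m\pi_2$ and the square $r_1\tilde m=m\pi_1$ a pullback. A morphism $u:S\to X$ is a characteristic monomorphism if for every Bourn-normal monomorphism $n:X\to Y$ the composite $nu$ is a Bourn-normal monomorphism. *)

Set Implicit Arguments.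
Unset Strict Implicit.

Record Category := {
  Ob :> Type;
  Hom : Ob -> Ob -> Type;
  comp : forall a b c : Ob, Hom b c -> Hom a b -> Hom a c;
  idm : forall a : Ob, Hom a a;
  comp_assoc : forall a b c d (f : Hom c d) (g : Hom b c) (h : Hom a b),
      comp f (comp g h) = comp (comp f g) h;
  comp_id_l : forall a b (f : Hom a b), comp (idm b) f = f;
  comp_id_r : forall a b (f : Hom a b), comp f (idm a) = f
}.

Arguments comp {c a b c0} f g : rename.
Arguments idm {c} a : rename.
Arguments Hom : clear implicits.

Section Defs.
Variable C : Category.

Definition is_mono {a b : C} (m : Hom C a b) : Prop :=
  forall x (f g : Hom C x a), comp m f = comp m g -> f = g.

Definition is_iso {a b : C} (f : Hom C a b) : Prop :=
  exists g : Hom C b a, comp g f = idm a /\ comp f g = idm b.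

Definition is_split_mono {a b : C} (m : Hom C a b) : Prop :=
  exists r : Hom C b a, comp r m = idm a.

Definition is_split_epi {a b : C} (p : Hom C a b) : Prop :=
  exists s : Hom C b a, comp p s = idm b.

Definition is_terminal (t : C) : Prop :=
  forall a, exists f : Hom C a t, forall g : Hom C a t, g = f.

Definition is_initial (t : C) : Prop :=
  forall a, exists f : Hom C t a, forall g : Hom C t a, g = f.

Definition is_pullback {A B Y P : C} (f : Hom C A Y) (g : Hom C B Y)
    (p1 : Hom C P A) (p2 : Hom C P B) : Prop :=
  comp f p1 = comp g p2 /\
  forall Q (q1 : Hom C Q A) (q2 : Hom C Q B), comp f q1 = comp g q2 ->
    exists h : Hom C Q P, comp p1 h = q1 /\ comp p2 h = q2 /\
      forall h' : Hom C Q P, comp p1 h' = q1 -> comp p2 h' = q2 -> h' = h.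

Definition is_product {A B P : C} (p1 : Hom C P A) (p2 : Hom C P B) : Prop :=
  forall Q (q1 : Hom C Q A) (q2 : Hom C Q B),
    exists h : Hom C Q P, comp p1 h = q1 /\ comp p2 h = q2 /\
      forall h' : Hom C Q P, comp p1 h' = q1 -> comp p2 h' = q2 -> h' = h.

Definition has_pullbacks : Prop :=
  forall A B Y (f : Hom C A Y) (g : Hom C B Y),
    exists P (p1 : Hom C P A) (p2 : Hom C P B), is_pullback f g p1 p2.

Definition has_finite_limits : Prop :=
  (exists t : C, is_terminal t) /\ has_pullbacks.

Definition is_zero_object (z : C) : Prop := is_initial z /\ is_terminal z.

Definition pointed : Prop := exists z : C, is_zero_object z.

Definition is_zero_mor {a b : C} (f : Hom C a b) : Prop :=
  exists z (g : Hom C a z) (h : Hom C z b), is_zero_object z /\ f = comp h g.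

Definition is_kernel {K A B : C} (k : Hom C K A) (f : Hom C A B) : Prop :=
  is_zero_mor (comp f k) /\
  forall Q (q : Hom C Q A), is_zero_mor (comp f q) ->
    exists h : Hom C Q K, comp k h = q /\
      forall h' : Hom C Q K, comp k h' = q -> h' = h.

Definition split_short_five_lemma : Prop :=
  forall (K A B K' A' B' : C)
         (k : Hom C K A) (p : Hom C A B) (s : Hom C B A)
         (k' : Hom C K' A') (p' : Hom C A' B') (s' : Hom C B' A')
         (u : Hom C K K') (v : Hom C A A') (w : Hom C B B'),
    is_kernel k p -> comp p s = idm B ->
    is_kernel k' p' -> comp p' s' = idm B' ->
    comp v k = comp k' u -> comp p' v = comp w p -> comp v s = comp s' w ->
    is_iso u -> is_iso w -> is_iso v.

Definition protomodular : Prop := split_short_five_lemma.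

Definition is_normal_mono {S X : C} (m : Hom C S X) : Prop :=
  exists Y (f : Hom C X Y), is_kernel m f.

Definition is_protosplit_mono {S X : C} (m : Hom C S X) : Prop :=
  exists Y (f : Hom C X Y), is_split_epi f /\ is_kernel m f.

Definition proto_complete (X : C) : Prop :=
  forall Y (m : Hom C X Y), is_protosplit_mono m -> is_split_mono m.

Definition is_equivalence_relation {R Y : C} (r1 r2 : Hom C R Y) : Prop :=
  (forall Q (f g : Hom C Q R), comp r1 f = comp r1 g -> comp r2 f = comp r2 g -> f = g) /\
  (exists d : Hom C Y R, comp r1 d = idm Y /\ comp r2 d = idm Y) /\
  (exists t : Hom C R R, comp r1 t = r2 /\ comp r2 t = r1) /\
  (forall P (q1 q2 : Hom C P R), is_pullback r2 r1 q1 q2 ->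
     exists t : Hom C P R, comp r1 t = comp r1 q1 /\ comp r2 t = comp r2 q2).

Definition is_bourn_normal {S Y : C} (m : Hom C S Y) : Prop :=
  is_mono m /\
  exists (R : C) (r1 r2 : Hom C R Y), is_equivalence_relation r1 r2 /\
  exists (SS : C) (pi1 pi2 : Hom C SS S), is_product pi1 pi2 /\
  exists mt : Hom C SS R,
    comp r1 mt = comp m pi1 /\ comp r2 mt = comp m pi2 /\
    is_pullback r1 m mt pi1.

Definition is_characteristic {S X : C} (u : Hom C S X) : Prop :=
  forall Y (n : Hom C X Y), is_bourn_normal n -> is_bourn_normal (comp n u).

End Defs.


(* Let [n : X -> Y] be Bourn-normal to an equivalence relation [R] on [Y]. Its
   normalization [k : X -> R] is a kernel of the split epimorphism [r1], hence a
   protosplit monomorphism, so proto-completeness of [X] yields a retraction [rho] of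
   [k]. For a kernel [m : S -> X] of [f], the pairs of [R] on which [f rho] takes the
   same value as on the diagonal form a subrelation [T] of [R], the equalizer of
   [f rho] and [f rho d r1]. In a protomodular category a kernel and a splitting of the
   same split epimorphism are jointly epic; testing on them shows that [T] is an
   equivalence relation and that [n m] is normal to [T]. *)

Local Notation "f ∘ g" := (comp f g) (at level 41, right associativity).

Section Composition.
Context {C : Category}.

Lemma comp_rw {a b c x : C} {f : Hom C b c} {g : Hom C a b} {h : Hom C a c}
  (fg_h : f ∘ g = h) (y : Hom C x a) : f ∘ g ∘ y = h ∘ y.
Proof. rewrite comp_assoc, fg_h. reflexivity. Qed.

Lemma comp_rw3 {a b c d x : C} {f : Hom C c d} {g : Hom C b c} {g' : Hom C a b}
  {h : Hom C a d} (fgg'_h : f ∘ g ∘ g' = h) (y : Hom C x a) :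
  f ∘ g ∘ g' ∘ y = h ∘ y.
Proof. rewrite <- fgg'_h, !comp_assoc. reflexivity. Qed.

Lemma iso_id (a : C) : is_iso (idm a).
Proof. exists (idm a). split; apply comp_id_l. Qed.

Lemma zero_mor_unique {a b : C} (f g : Hom C a b) :
  is_zero_mor f -> is_zero_mor g -> f = g.
Proof.
  intros [z [f0 [f1 [[_ z_term] ->]]]] [z' [g0 [g1 [[z'_init _] ->]]]].
  destruct (z'_init z) as [c _], (z_term a) as [ta ta_uniq].
  destruct (z'_init b) as [tb tb_uniq].
  assert (f0 = c ∘ g0) by (rewrite (ta_uniq f0), (ta_uniq (c ∘ g0)); reflexivity).
  assert (g1 = f1 ∘ c) by (rewrite (tb_uniq g1), (tb_uniq (f1 ∘ c)); reflexivity).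
  subst. rewrite comp_assoc. reflexivity.
Qed.

Lemma zero_mor_postcomp {a b c : C} (f : Hom C b c) (g : Hom C a b) :
  is_zero_mor g -> is_zero_mor (f ∘ g).
Proof.
  intros [z [g0 [g1 [z_zero ->]]]].
  exists z, g0, (f ∘ g1). split; [exact z_zero | apply comp_assoc].
Qed.

Lemma zero_mor_precomp {a b c : C} (f : Hom C b c) (g : Hom C a b) :
  is_zero_mor f -> is_zero_mor (f ∘ g).
Proof.
  intros [z [f0 [f1 [z_zero ->]]]].
  exists z, (f0 ∘ g), f1. split; [exact z_zero | symmetry; apply comp_assoc].
Qed.

Lemma zero_mor_precomp2 {a b c d : C} (f : Hom C c d) (g : Hom C b c) (h : Hom C a b) :
  is_zero_mor (f ∘ g) -> is_zero_mor (f ∘ g ∘ h).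
Proof. intros fg_zero. rewrite comp_assoc. apply zero_mor_precomp; exact fg_zero. Qed.

End Composition.

Ltac simp := rewrite <- ?comp_assoc, ?comp_id_l, ?comp_id_r.
Ltac simp_in H := rewrite <- ?comp_assoc, ?comp_id_l, ?comp_id_r in H.
Ltac arw H := simp; first [rewrite H | rewrite (comp_rw H) | rewrite (comp_rw3 H)]; simp.
Ltac zero_mor :=
  repeat match goal with H : is_zero_mor _ |- _ => progress simp_in H end;
  simp;
  first [ assumption
        | apply zero_mor_postcomp; zero_mor
        | apply zero_mor_precomp; zero_mor
        | apply zero_mor_precomp2; zero_mor ].
Ltac zero_eq := apply zero_mor_unique; zero_mor.

Section Limits.
Context {C : Category}.

Definition is_equalizer {A Z E : C} (g h : Hom C A Z) (e : Hom C E A) : Prop :=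
  g ∘ e = h ∘ e /\
  forall Q (a : Hom C Q A), g ∘ a = h ∘ a ->
    exists w : Hom C Q E, e ∘ w = a /\ forall w', e ∘ w' = a -> w' = w.

Lemma kernel_mono {K A B : C} {k : Hom C K A} {f : Hom C A B} :
  is_kernel k f -> is_mono k.
Proof.
  intros [fk_zero k_univ] x g h kg_kh.
  destruct (k_univ x (k ∘ h)) as [w [_ w_uniq]]; [zero_mor |].
  rewrite (w_uniq g kg_kh), (w_uniq h eq_refl). reflexivity.
Qed.

Lemma product_ext {A B P Q : C} (p1 : Hom C P A) (p2 : Hom C P B) (x y : Hom C Q P) :
  is_product p1 p2 -> p1 ∘ x = p1 ∘ y -> p2 ∘ x = p2 ∘ y -> x = y.
Proof.
  intros P_prod p1x p2x. destruct (P_prod Q (p1 ∘ x) (p2 ∘ x)) as [h [_ [_ h_uniq]]].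
  rewrite (h_uniq x eq_refl eq_refl), (h_uniq y (eq_sym p1x) (eq_sym p2x)).
  reflexivity.
Qed.

Lemma pullback_ext {A B Y P Q : C} (f : Hom C A Y) (g : Hom C B Y)
  (p1 : Hom C P A) (p2 : Hom C P B) (x y : Hom C Q P) :
  is_pullback f g p1 p2 -> p1 ∘ x = p1 ∘ y -> p2 ∘ x = p2 ∘ y -> x = y.
Proof.
  intros [comm univ] p1x p2x.
  destruct (univ Q (p1 ∘ x) (p2 ∘ x)) as [h [_ [_ h_uniq]]].
  { rewrite !comp_assoc, comm. reflexivity. }
  rewrite (h_uniq x eq_refl eq_refl), (h_uniq y (eq_sym p1x) (eq_sym p2x)).
  reflexivity.
Qed.

Lemma pullback_sym {A B Y P : C} {f : Hom C A Y} {g : Hom C B Y}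
  {p1 : Hom C P A} {p2 : Hom C P B} :
  is_pullback f g p1 p2 -> is_pullback g f p2 p1.
Proof.
  intros [comm univ]. split; [symmetry; exact comm |].
  intros Q q2 q1 gq2_fq1.
  destruct (univ Q q1 q2 (eq_sym gq2_fq1)) as [h [p1h [p2h h_uniq]]].
  exists h. split; [exact p2h | split; [exact p1h |]].
  intros h' p2h' p1h'. exact (h_uniq h' p1h' p2h').
Qed.

Lemma pullback_comp_iso {A B Y P P' : C} {f : Hom C A Y} {g : Hom C B Y}
  {p1 : Hom C P A} {p2 : Hom C P B} {phi : Hom C P' P} :
  is_pullback f g p1 p2 -> is_iso phi -> is_pullback f g (p1 ∘ phi) (p2 ∘ phi).
Proof.
  intros [comm univ] [psi [psi_phi phi_psi]]. split.
  - rewrite !comp_assoc, comm. reflexivity.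
  - intros Q q1 q2 fq1_gq2. destruct (univ Q q1 q2 fq1_gq2) as [h [p1h [p2h h_uniq]]].
    exists (psi ∘ h). split; [| split].
    + simp. arw phi_psi. exact p1h.
    + simp. arw phi_psi. exact p2h.
    + intros h' p1h' p2h'. simp_in p1h'. simp_in p2h'.
      rewrite <- (h_uniq (phi ∘ h') p1h' p2h'). arw psi_phi. reflexivity.
Qed.

Lemma pullback_section {A B Y P : C} {g : Hom C A Y} {h : Hom C B Y}
  {q1 : Hom C P A} {q2 : Hom C P B} {σ : Hom C Y A} :
  is_pullback g h q1 q2 -> g ∘ σ = idm Y ->
  exists sg : Hom C B P, q1 ∘ sg = σ ∘ h /\ q2 ∘ sg = idm B.
Proof.
  intros [_ univ] gσ. destruct (univ B (σ ∘ h) (idm B)) as [sg [q1sg [q2sg _]]].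
  - arw gσ. reflexivity.
  - exists sg. split; assumption.
Qed.

Lemma product_inj2_kernel {A B P : C} {p1 : Hom C P A} {p2 : Hom C P B} {i2 : Hom C B P} :
  is_product p1 p2 -> is_zero_mor (p1 ∘ i2) -> p2 ∘ i2 = idm B -> is_kernel i2 p1.
Proof.
  intros P_prod p1i2_zero p2i2. split; [exact p1i2_zero |].
  intros Q q p1q_zero. exists (p2 ∘ q). split.
  - apply (product_ext p1 p2); [exact P_prod | zero_eq | arw p2i2; reflexivity].
  - intros h' i2h'. rewrite <- i2h'. arw p2i2. reflexivity.
Qed.

Lemma kernel_restrict_mono {K A B E : C} {κ : Hom C K A} {p : Hom C A B}
  {e : Hom C E A} {κ' : Hom C K E} :
  is_mono e -> is_kernel κ p -> e ∘ κ' = κ -> is_kernel κ' (p ∘ e).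
Proof.
  intros e_mono [pκ_zero κ_univ] eκ'. split.
  - simp. rewrite eκ'. exact pκ_zero.
  - intros Q q q_zero. simp_in q_zero.
    destruct (κ_univ Q (e ∘ q) q_zero) as [v [κv v_uniq]].
    exists v. split.
    + apply e_mono. arw eκ'. exact κv.
    + intros v' κ'v'. apply v_uniq. rewrite <- eκ', <- κ'v'. simp. reflexivity.
Qed.

Lemma equalizer_mono {A Z E : C} {g h : Hom C A Z} {e : Hom C E A} :
  is_equalizer g h e -> is_mono e.
Proof.
  intros [ge_he univ] x a b ea_eb.
  destruct (univ x (e ∘ b)) as [w [_ w_uniq]].
  { rewrite !comp_assoc, ge_he. reflexivity. }
  rewrite (w_uniq a ea_eb), (w_uniq b eq_refl). reflexivity.
Qed.

Lemma equalizer_comp {A Z E Q : C} {g h : Hom C A Z} {e : Hom C E A} {a : Hom C Q E} :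
  is_equalizer g h e -> g ∘ e ∘ a = h ∘ e ∘ a.
Proof. intros [ge_he _]. rewrite !comp_assoc, ge_he. reflexivity. Qed.

Lemma equalizer_factor {A Z E Q : C} {g h : Hom C A Z} {e : Hom C E A} {a : Hom C Q A} :
  is_equalizer g h e -> g ∘ a = h ∘ a -> exists w : Hom C Q E, e ∘ w = a.
Proof. intros [_ univ] ga_ha. destruct (univ Q a ga_ha) as [w [ew _]]. now exists w. Qed.

Section FiniteLimits.
Hypothesis C_pointed : pointed C.
Hypothesis C_lim : has_finite_limits C.

Lemma zero_mor_exists (a b : C) : exists z : Hom C a b, is_zero_mor z.
Proof.
  destruct C_pointed as [z [z_init z_term]].
  destruct (z_term a) as [ga _], (z_init b) as [hb _].
  exists (hb ∘ ga), z, ga, hb. split; [split; assumption | reflexivity].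
Qed.

Lemma product_exists (A B : C) :
  exists P (p1 : Hom C P A) (p2 : Hom C P B), is_product p1 p2.
Proof.
  destruct C_lim as [[t t_term] C_pb].
  destruct (t_term A) as [ta ta_uniq], (t_term B) as [tb tb_uniq].
  destruct (C_pb _ _ _ ta tb) as [P [p1 [p2 [_ univ]]]].
  exists P, p1, p2. intros Q q1 q2. apply univ.
  destruct (t_term Q) as [tq tq_uniq]. rewrite (tq_uniq (ta ∘ q1)), (tq_uniq (tb ∘ q2)).
  reflexivity.
Qed.

(* The equalizer of [g, h : A -> Z] is the pullback of the graphs <1, g> and <1, h>. *)
Lemma equalizer_exists {A Z : C} (g h : Hom C A Z) :
  exists E (e : Hom C E A), is_equalizer g h e.
Proof.
  destruct (product_exists A Z) as [P [p1 [p2 P_prod]]].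
  destruct (P_prod A (idm A) g) as [u [p1u [p2u _]]].
  destruct (P_prod A (idm A) h) as [v [p1v [p2v _]]].
  destruct (proj2 C_lim _ _ _ u v) as [E [e [e' [ue_ve univ]]]].
  assert (e_e' : e = e').
  { transitivity (p1 ∘ u ∘ e); [arw p1u; reflexivity |].
    rewrite ue_ve. arw p1v. reflexivity. }
  subst e'. exists E, e. split.
  - rewrite <- p2u, <- p2v. simp. rewrite ue_ve. reflexivity.
  - intros Q a ga_ha. destruct (univ Q a a) as [w [ew [_ w_uniq]]].
    + apply (product_ext p1 p2); [exact P_prod | |].
      * arw p1u. arw p1v. reflexivity.
      * arw p2u. arw p2v. exact ga_ha.
    + exists w. split; [exact ew |]. intros w' ew'. exact (w_uniq w' ew' ew').
Qed.

Lemma kernel_from_pullback {A B Y P K : C} {g : Hom C A Y} {h : Hom C B Y}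
  {q1 : Hom C P A} {q2 : Hom C P B} {κ : Hom C K P} :
  is_pullback g h q1 q2 -> is_kernel κ q2 -> is_kernel (q1 ∘ κ) g.
Proof.
  intros pb [q2κ_zero κ_univ]. pose proof pb as [comm univ]. split.
  - rewrite comp_assoc, comm. zero_mor.
  - intros Q q gq_zero. destruct (zero_mor_exists Q B) as [z z_zero].
    destruct (univ Q q z) as [w [q1w [q2w _]]]; [zero_eq |].
    destruct (κ_univ Q w) as [v [κv v_uniq]]; [rewrite q2w; exact z_zero |].
    exists v. split.
    + simp. rewrite κv. exact q1w.
    + intros v' q1κv'. simp_in q1κv'. apply v_uniq.
      apply (pullback_ext g h q1 q2); [exact pb | |].
      * simp. rewrite q1κv', q1w. reflexivity.
      * rewrite q2w. zero_eq.
Qed.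

Lemma pullback_kernel {A B Y P K : C} {g : Hom C A Y} {h : Hom C B Y}
  {q1 : Hom C P A} {q2 : Hom C P B} {κ : Hom C K A} :
  is_pullback g h q1 q2 -> is_kernel κ g ->
  exists ka : Hom C K P, q1 ∘ ka = κ /\ is_kernel ka q2.
Proof.
  intros pb [gκ_zero κ_univ]. pose proof pb as [comm univ].
  destruct (zero_mor_exists K B) as [z z_zero].
  destruct (univ K κ z) as [ka [q1ka [q2ka _]]]; [zero_eq |].
  exists ka. split; [exact q1ka | split; [rewrite q2ka; exact z_zero |]].
  intros Q w q2w_zero.
  destruct (κ_univ Q (q1 ∘ w)) as [v [κv v_uniq]].
  { rewrite comp_assoc, comm. zero_mor. }
  exists v. split.
  - apply (pullback_ext g h q1 q2); [exact pb | arw q1ka; exact κv |].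
    arw q2ka. zero_eq.
  - intros v' kav'. apply v_uniq. rewrite <- q1ka, <- kav'. simp. reflexivity.
Qed.

Section Protomodular.
Hypothesis C_proto : protomodular C.

(* The equalizer of [g] and [h] contains the kernel and the section, so by the
   split short five lemma it is an isomorphism. *)
Lemma kernel_section_jointly_epic {K A B Z : C} (κ : Hom C K A) (p : Hom C A B)
  (s : Hom C B A) (g h : Hom C A Z) :
  is_kernel κ p -> p ∘ s = idm B -> g ∘ κ = h ∘ κ -> g ∘ s = h ∘ s -> g = h.
Proof.
  intros κ_ker ps gκ_hκ gs_hs.
  destruct (equalizer_exists g h) as [E [e e_eq]].
  destruct (equalizer_factor e_eq gκ_hκ) as [κ' eκ'].
  destruct (equalizer_factor e_eq gs_hs) as [s' es'].
  assert (e_iso : is_iso e).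
  { apply (C_proto _ _ _ _ _ _ κ' (p ∘ e) s' κ p s (idm K) e (idm B));
      try assumption; try apply iso_id.
    - exact (kernel_restrict_mono (equalizer_mono e_eq) κ_ker eκ').
    - simp. rewrite es'. exact ps.
    - rewrite comp_id_r. exact eκ'.
    - rewrite comp_id_l. reflexivity.
    - rewrite comp_id_r. exact es'. }
  destruct e_iso as [e' [_ e_e']].
  rewrite <- (comp_id_r g), <- (comp_id_r h), <- e_e'.
  exact (equalizer_comp (a := e') e_eq).
Qed.

Lemma product_map_factors_fst {A B P Z : C} (p1 : Hom C P A) (p2 : Hom C P B)
  (i2 : Hom C B P) (δ : Hom C A P) (h : Hom C P Z) :
  is_product p1 p2 -> is_zero_mor (p1 ∘ i2) -> p2 ∘ i2 = idm B -> p1 ∘ δ = idm A ->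
  is_zero_mor (h ∘ i2) -> h = h ∘ δ ∘ p1.
Proof.
  intros P_prod p1i2_zero p2i2 p1δ hi2_zero.
  apply (kernel_section_jointly_epic i2 p1 δ).
  - exact (product_inj2_kernel P_prod p1i2_zero p2i2).
  - exact p1δ.
  - zero_eq.
  - simp. rewrite p1δ. simp. reflexivity.
Qed.

(* The comparison map to the pullback is an isomorphism by the split short five lemma. *)
Lemma split_square_pullback {K A B A' B' : C} (κ : Hom C K A) (p : Hom C A B)
  (s : Hom C B A) (g : Hom C A' B') (σ : Hom C B' A') (x : Hom C A A') (y : Hom C B B') :
  is_kernel κ p -> p ∘ s = idm B -> g ∘ σ = idm B' -> is_kernel (x ∘ κ) g ->
  g ∘ x = y ∘ p -> x ∘ s = σ ∘ y -> is_pullback g y x p.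
Proof.
  intros κ_ker ps gσ xκ_ker gx_yp xs_σy.
  destruct (proj2 C_lim _ _ _ g y) as [P [b1 [b2 pb]]].
  destruct (proj2 pb A x p gx_yp) as [phi [b1phi [b2phi _]]].
  destruct (pullback_kernel pb xκ_ker) as [ka [b1ka ka_ker]].
  destruct (pullback_section pb gσ) as [sg [b1sg b2sg]].
  pose proof (proj1 κ_ker). pose proof (proj1 ka_ker).
  assert (phi_iso : is_iso phi).
  { apply (C_proto _ _ _ _ _ _ κ p s ka b2 sg (idm K) phi (idm B));
      try assumption; try apply iso_id.
    - rewrite comp_id_r. apply (pullback_ext g y b1 b2); [exact pb | |].
      + arw b1phi. rewrite b1ka. reflexivity.
      + arw b2phi. zero_eq.
    - rewrite comp_id_l. exact b2phi.
    - rewrite comp_id_r. apply (pullback_ext g y b1 b2); [exact pb | |].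
      + arw b1phi. rewrite b1sg. exact xs_σy.
      + arw b2phi. rewrite b2sg. exact ps. }
  rewrite <- b1phi, <- b2phi. exact (pullback_comp_iso pb phi_iso).
Qed.

End Protomodular.

(* The kernel <0, 1> of [pi1] is carried along the pullback square [r1 mt = m pi1]. *)
Lemma bourn_normalization {S Y R SS : C} {m : Hom C S Y} {r1 r2 : Hom C R Y}
  {pi1 pi2 : Hom C SS S} {mt : Hom C SS R} {i2 : Hom C S SS} :
  is_product pi1 pi2 -> r2 ∘ mt = m ∘ pi2 -> is_pullback r1 m mt pi1 ->
  is_zero_mor (pi1 ∘ i2) -> pi2 ∘ i2 = idm S ->
  is_kernel (mt ∘ i2) r1 /\ r2 ∘ mt ∘ i2 = m.
Proof.
  intros SS_prod r2mt pb pi1i2_zero pi2i2. split.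
  - exact (kernel_from_pullback pb (product_inj2_kernel SS_prod pi1i2_zero pi2i2)).
  - arw r2mt. rewrite pi2i2. simp. reflexivity.
Qed.

End FiniteLimits.
End Limits.

Section EquivalenceRelation.
Context {C : Category}.
Hypotheses (C_pointed : pointed C) (C_lim : has_finite_limits C) (C_proto : protomodular C).
Context {Y R : C} {r1 r2 : Hom C R Y} {d : Hom C Y R} {tt : Hom C R R}.
Hypotheses
  (r_jointly_monic : forall Q (a b : Hom C Q R),
     r1 ∘ a = r1 ∘ b -> r2 ∘ a = r2 ∘ b -> a = b)
  (r1d : r1 ∘ d = idm Y) (r2d : r2 ∘ d = idm Y) (r1tt : r1 ∘ tt = r2) (r2tt : r2 ∘ tt = r1)
  (r_trans : forall P (q1 q2 : Hom C P R), is_pullback r2 r1 q1 q2 ->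
     exists t : Hom C P R, r1 ∘ t = r1 ∘ q1 /\ r2 ∘ t = r2 ∘ q2).

Lemma tt_d : tt ∘ d = d.
Proof.
  apply r_jointly_monic; [arw r1tt; rewrite r2d, r1d | arw r2tt; rewrite r1d, r2d];
    reflexivity.
Qed.

Section EqualizerSubrelation.
Context {Z T K : C} {φ : Hom C R Z} {e : Hom C T R} {kT : Hom C K T}.
Hypotheses (e_eq : is_equalizer φ (φ ∘ d ∘ r1) e) (kT_ker : is_kernel kT (r1 ∘ e)).

Lemma equalizer_subrelation_reflexive : exists dT : Hom C Y T, e ∘ dT = d.
Proof. apply (equalizer_factor e_eq). arw r1d. reflexivity. Qed.

Lemma equalizer_subrelation_symmetric :
  φ ∘ tt ∘ e ∘ kT = φ ∘ d ∘ r2 ∘ e ∘ kT ->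
  exists t : Hom C T T, (r1 ∘ e) ∘ t = r2 ∘ e /\ (r2 ∘ e) ∘ t = r1 ∘ e.
Proof.
  intros flip_kT. destruct equalizer_subrelation_reflexive as [dT edT].
  destruct (equalizer_factor (a := tt ∘ e) e_eq) as [t et].
  { simp. arw r1tt.
    apply (kernel_section_jointly_epic C_lim C_proto kT (r1 ∘ e) dT).
    - exact kT_ker.
    - simp. rewrite edT. exact r1d.
    - simp. exact flip_kT.
    - simp. rewrite edT, tt_d. arw r2d. reflexivity. }
  exists t. split; simp; rewrite et; [arw r1tt | arw r2tt]; reflexivity.
Qed.

(* [tR z] composes two pairs of [T] inside [R]; it lies in [T] because it does
   on the kernel <0, kT> and on the section <1, dT r2 e> of the first projection. *)
Lemma equalizer_subrelation_transitive P (q1 q2 : Hom C P T) :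
  is_pullback (r2 ∘ e) (r1 ∘ e) q1 q2 ->
  exists t : Hom C P T,
    (r1 ∘ e) ∘ t = (r1 ∘ e) ∘ q1 /\ (r2 ∘ e) ∘ t = (r2 ∘ e) ∘ q2.
Proof.
  intros pb.
  destruct (proj2 C_lim _ _ _ r2 r1) as [PR [u1 [u2 PR_pb]]].
  destruct (r_trans _ _ _ PR_pb) as [tR [r1tR r2tR]].
  destruct (proj2 PR_pb P (e ∘ q1) (e ∘ q2)) as [z [u1z [u2z _]]].
  { simp. pose proof (proj1 pb) as comm. simp_in comm. exact comm. }
  destruct equalizer_subrelation_reflexive as [dT edT].
  destruct (pullback_kernel C_pointed (pullback_sym pb) kT_ker) as [ka [q2ka ka_ker]].
  destruct (pullback_section (σ := dT) (pullback_sym pb)) as [sg [q2sg q1sg]].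
  { simp. rewrite edT. exact r1d. }
  pose proof (proj1 kT_ker). pose proof (proj1 ka_ker).
  assert (tR_ka : tR ∘ z ∘ ka = e ∘ kT).
  { apply r_jointly_monic.
    - arw r1tR. arw u1z. zero_eq.
    - arw r2tR. arw u2z. arw q2ka. reflexivity. }
  assert (tR_sg : tR ∘ z ∘ sg = e).
  { apply r_jointly_monic.
    - arw r1tR. arw u1z. arw q1sg. reflexivity.
    - arw r2tR. arw u2z. arw q2sg. arw edT. arw r2d. reflexivity. }
  destruct (equalizer_factor (a := tR ∘ z) e_eq) as [t et].
  { apply (kernel_section_jointly_epic C_lim C_proto ka q1 sg); [exact ka_ker | exact q1sg | |].
    - simp. rewrite tR_ka. pose proof (equalizer_comp (a := kT) e_eq) as comm.
      simp_in comm. exact comm.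
    - simp. rewrite tR_sg. pose proof (proj1 e_eq) as comm. simp_in comm. exact comm. }
  exists t. split; simp; rewrite et; [arw r1tR; arw u1z | arw r2tR; arw u2z]; reflexivity.
Qed.

Lemma equalizer_subrelation_equivalence :
  φ ∘ tt ∘ e ∘ kT = φ ∘ d ∘ r2 ∘ e ∘ kT ->
  is_equivalence_relation (r1 ∘ e) (r2 ∘ e).
Proof.
  intros flip_kT. split; [| split; [| split]].
  - intros Q a b r1ea r2ea. simp_in r1ea. simp_in r2ea.
    apply (equalizer_mono e_eq), r_jointly_monic; assumption.
  - destruct equalizer_subrelation_reflexive as [dT edT].
    exists dT. split; simp; rewrite edT; assumption.
  - exact (equalizer_subrelation_symmetric flip_kT).
  - exact equalizer_subrelation_transitive.
Qed.

End EqualizerSubrelation.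

Section RetractedNormalization.
Context {X S W SS : C} {n : Hom C X Y} {m : Hom C S X} {f : Hom C X W}
  {k : Hom C X R} {rho : Hom C R X} {s1 s2 : Hom C SS S} {mu : Hom C SS R}.
Hypotheses (n_mono : is_mono n) (m_ker : is_kernel m f)
  (k_ker : is_kernel k r1) (r2k : r2 ∘ k = n) (rho_k : rho ∘ k = idm X)
  (SS_prod : is_product s1 s2)
  (r1mu : r1 ∘ mu = n ∘ m ∘ s1) (r2mu : r2 ∘ mu = n ∘ m ∘ s2).

Lemma mu_inj2 (j : Hom C S SS) :
  is_zero_mor (s1 ∘ j) -> s2 ∘ j = idm S -> mu ∘ j = k ∘ m.
Proof.
  intros s1j_zero s2j. pose proof (proj1 k_ker).
  apply r_jointly_monic.
  - arw r1mu. zero_eq.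
  - arw r2mu. arw s2j. arw r2k. reflexivity.
Qed.

Lemma mu_inj1 (j : Hom C S SS) :
  s1 ∘ j = idm S -> is_zero_mor (s2 ∘ j) -> mu ∘ j = tt ∘ k ∘ m.
Proof.
  intros s1j s2j_zero. pose proof (proj1 k_ker).
  apply r_jointly_monic.
  - arw r1mu. arw s1j. arw r1tt. arw r2k. reflexivity.
  - arw r2mu. arw r2tt. zero_eq.
Qed.

Lemma mu_diag (δ : Hom C S SS) :
  s1 ∘ δ = idm S -> s2 ∘ δ = idm S -> mu ∘ δ = d ∘ n ∘ m.
Proof.
  intros s1δ s2δ.
  apply r_jointly_monic; [arw r1mu; arw s1δ; arw r1d | arw r2mu; arw s2δ; arw r2d];
    reflexivity.
Qed.

(* [f rho mu] kills <0, 1> since [rho k = 1] and [f m = 0]; hence it only depends on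
   the first coordinate. *)
Lemma rho_mu_fst : f ∘ rho ∘ mu = f ∘ rho ∘ d ∘ n ∘ m ∘ s1.
Proof.
  destruct (zero_mor_exists C_pointed S S) as [z z_zero].
  destruct (SS_prod S z (idm S)) as [j2 [s1j2 [s2j2 _]]].
  destruct (SS_prod S (idm S) (idm S)) as [δ [s1δ [s2δ _]]].
  assert (s1j2_zero : is_zero_mor (s1 ∘ j2)) by (rewrite s1j2; exact z_zero).
  pose proof (proj1 m_ker).
  transitivity ((f ∘ rho ∘ mu) ∘ δ ∘ s1).
  - apply (product_map_factors_fst C_lim C_proto s1 s2 j2 δ); try assumption.
    arw (mu_inj2 j2 s1j2_zero s2j2). arw rho_k. zero_mor.
  - arw (mu_diag δ s1δ s2δ). reflexivity.
Qed.

Lemma rho_tt_k : f ∘ rho ∘ tt ∘ k ∘ m = f ∘ rho ∘ d ∘ n ∘ m.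
Proof.
  destruct (zero_mor_exists C_pointed S S) as [z z_zero].
  destruct (SS_prod S (idm S) z) as [j1 [s1j1 [s2j1 _]]].
  rewrite <- (mu_inj1 j1 s1j1); [| rewrite s2j1; exact z_zero].
  arw rho_mu_fst. arw s1j1. reflexivity.
Qed.

Lemma equalizer_kernel {T : C} {e : Hom C T R} {kT : Hom C S T} :
  is_equalizer (f ∘ rho) ((f ∘ rho) ∘ d ∘ r1) e -> e ∘ kT = k ∘ m ->
  is_kernel kT (r1 ∘ e).
Proof.
  intros e_eq ekT. pose proof (proj1 k_ker). split.
  - simp. rewrite ekT. zero_mor.
  - intros Q q r1eq_zero. simp_in r1eq_zero.
    destruct (proj2 k_ker Q (e ∘ q) r1eq_zero) as [x [kx _]].
    destruct (proj2 m_ker Q x) as [w [mw w_uniq]].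
    { assert (fx : f ∘ x = (f ∘ rho) ∘ e ∘ q) by (rewrite <- kx; arw rho_k; reflexivity).
      rewrite fx, (equalizer_comp e_eq). zero_mor. }
    exists w. split.
    + apply (equalizer_mono e_eq). arw ekT. rewrite mw. exact kx.
    + intros w' kTw'. apply w_uniq, (kernel_mono k_ker).
      rewrite kx, <- kTw'. arw ekT. reflexivity.
Qed.

Lemma equalizer_normalization_pullback {T : C} {e : Hom C T R}
  {kT : Hom C S T} {dT : Hom C Y T} {mT : Hom C SS T} :
  is_equalizer (f ∘ rho) ((f ∘ rho) ∘ d ∘ r1) e ->
  e ∘ kT = k ∘ m -> e ∘ dT = d -> e ∘ mT = mu ->
  is_pullback (r1 ∘ e) (n ∘ m) mT s1.
Proof.
  intros e_eq ekT edT emT.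
  destruct (zero_mor_exists C_pointed S S) as [z z_zero].
  destruct (SS_prod S z (idm S)) as [j2 [s1j2 [s2j2 _]]].
  destruct (SS_prod S (idm S) (idm S)) as [δ [s1δ [s2δ _]]].
  assert (s1j2_zero : is_zero_mor (s1 ∘ j2)) by (rewrite s1j2; exact z_zero).
  assert (mTj2 : mT ∘ j2 = kT).
  { apply (equalizer_mono e_eq). arw emT.
    rewrite (mu_inj2 j2 s1j2_zero s2j2), ekT. reflexivity. }
  assert (mTδ : mT ∘ δ = dT ∘ n ∘ m).
  { apply (equalizer_mono e_eq). arw emT. arw edT. exact (mu_diag δ s1δ s2δ). }
  apply (split_square_pullback C_pointed C_lim C_proto j2 s1 δ (r1 ∘ e) dT).
  - exact (product_inj2_kernel SS_prod s1j2_zero s2j2).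
  - exact s1δ.
  - arw edT. exact r1d.
  - rewrite mTj2. exact (equalizer_kernel e_eq ekT).
  - arw emT. exact r1mu.
  - simp. exact mTδ.
Qed.

Lemma bourn_normal_comp : is_bourn_normal (n ∘ m).
Proof.
  destruct (equalizer_exists C_lim (f ∘ rho) ((f ∘ rho) ∘ d ∘ r1)) as [T [e e_eq]].
  pose proof (proj1 k_ker). pose proof (proj1 m_ker).
  destruct (equalizer_factor (a := k ∘ m) e_eq) as [kT ekT]; [arw rho_k; zero_eq |].
  destruct (equalizer_subrelation_reflexive e_eq) as [dT edT].
  destruct (equalizer_factor (a := mu) e_eq) as [mT emT].
  { arw rho_mu_fst. arw r1mu. reflexivity. }
  split.
  { intros Q a b nma_nmb. simp_in nma_nmb.
    exact (kernel_mono m_ker _ _ _ (n_mono _ _ _ nma_nmb)). }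
  exists T, (r1 ∘ e), (r2 ∘ e). split.
  { apply (equalizer_subrelation_equivalence e_eq (equalizer_kernel e_eq ekT)).
    arw ekT. arw r2k. exact rho_tt_k. }
  exists SS, s1, s2. split; [exact SS_prod |].
  exists mT. split; [| split]; [arw emT; exact r1mu | arw emT; exact r2mu |].
  exact (equalizer_normalization_pullback e_eq ekT edT emT).
Qed.

End RetractedNormalization.
End EquivalenceRelation.

Theorem proposition5p4 (C : Category) :
  pointed C -> has_finite_limits C -> protomodular C ->
  forall (S X : C) (m : Hom C S X),
    proto_complete X -> is_normal_mono m -> is_characteristic m.
Proof.
  intros C_pointed C_lim C_proto S X m X_complete [W [f m_ker]] Y n
    [n_mono [R [r1 [r2 [R_equiv [XX [p1 [p2 [XX_prod [mt [r1mt [r2mt mt_pb]]]]]]]]]]]].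
  destruct R_equiv as [r_jointly_monic [[d [r1d r2d]] [[tt [r1tt r2tt]] r_trans]]].
  destruct (zero_mor_exists C_pointed X X) as [z z_zero].
  destruct (XX_prod X z (idm X)) as [i2 [p1i2 [p2i2 _]]].
  destruct (bourn_normalization C_pointed (i2 := i2) XX_prod r2mt mt_pb) as [k_ker r2k];
    [rewrite p1i2; exact z_zero | exact p2i2 |].
  destruct (X_complete R (mt ∘ i2)) as [rho rho_k].
  { exists Y, r1. split; [exists d; exact r1d | exact k_ker]. }
  destruct (product_exists C_lim S S) as [SS [s1 [s2 SS_prod]]].
  destruct (XX_prod SS (m ∘ s1) (m ∘ s2)) as [mm [p1mm [p2mm _]]].
  apply (bourn_normal_comp (mu := mt ∘ mm) C_pointed C_lim C_proto
    r_jointly_monic r1d r2d r1tt r2tt r_trans n_mono m_ker k_ker r2k rho_k SS_prod).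
  - arw r1mt. arw p1mm. reflexivity.
  - arw r2mt. arw p2mm. reflexivity.
Qed.
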